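(* Let $\Omega$ be a Stone signature and $\mathcal S$ a Stone pseudovariety. Then the class $\widehat{\mathcal S}$ of all Stone topological $\Omega$-algebras that are residually $\mathcal S$ is also a Stone pseudovariety and, for every topological space $X$, the relatively free Stone topological algebras $\overline{\Omega}_X\mathcal S$ and $\overline{\Omega}_X\widehat{\mathcal S}$ are isomorphic (as topological algebras).
   Context: A Stone signature is $\Omega=\biguplus_n\Omega_n$ with each $\Omega_n$ a compact Hausdorff 0-dimensional space. A Stone topological $\Omega$-algebra is a compact Hausdorff 0-dimensional space $A$ with continuous evaluation maps $\Omega_n\times A^n\to A$. A Stone pseudovariety is a nonempty class of Stone topological $\Omega$-algebras closed under images by onto continuous homomorphisms that are Stone topological algebras, closed subalgebras, and finite direct products. An algebra is residually $\mathcal C$ if any two distinct elements are separated by a continuous homomorphism into a member of $\mathcal C$. For a Stone pseudovariety $\mathcal T$, $\overline{\Omega}_X\mathcal T$ denotes the $\mathcal T$-free Stone topological algebra over $X$: a Stone topological algebra $F$ that is residually $\mathcal T$, with a continuous map $\iota:X\to F$ whose image generates a dense subalgebra, such that every continuous map $X\to T$ with $T\in\mathcal T$ factors uniquely as $\hat\varphi\circ\iota$ with $\hat\varphi$ a continuous homomorphism. *)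

From HB Require Import structures.
From mathcomp Require Import all_boot all_order.
From mathcomp Require Import all_classical all_reals all_analysis.

Set Implicit Arguments.
Unset Strict Implicit.
Unset Printing Implicit Defensive.

Local Open Scope classical_set_scope.

Definition clopen_basis (T : topologicalType) : Prop :=
  forall (x : T) (U : set T), open U -> U x ->
    exists V : set T, [/\ clopen V, V x & V `<=` U].

Definition stone_space (T : topologicalType) : Prop :=
  [/\ compact [set: T], hausdorff_space T & clopen_basis T].

(** Stone signature: Omega = disjoint union of the Omega_n, each a Stone space. *)
Record StoneSig := {
  sig_ar :> nat -> topologicalType;
  sig_stone : forall n, stone_space (sig_ar n) }.

Definition power (A : topologicalType) (n : nat) := {ptws 'I_n -> A}.

Record StoneAlg (Om : StoneSig) := {
  alg_car :> topologicalType;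
  alg_stone : stone_space alg_car;
  alg_op : forall n, Om n -> power alg_car n -> alg_car;
  alg_op_cont : forall n,
    continuous (fun p : Om n * power alg_car n => alg_op p.1 p.2) }.

Arguments alg_op {Om} s {n} _ _.

Section Defs.
Variable Om : StoneSig.

Definition is_hom (A B : StoneAlg Om) (f : A -> B) : Prop :=
  forall n (w : Om n) (xs : 'I_n -> A),
    f (alg_op A w xs) = alg_op B w (fun i => f (xs i)).

Definition cont_hom (A B : StoneAlg Om) (f : A -> B) : Prop :=
  is_hom f /\ continuous f.

Definition alg_class := StoneAlg Om -> Prop.

Definition residually (C : alg_class) (A : StoneAlg Om) : Prop :=
  forall x y : A, x <> y ->
    exists (B : StoneAlg Om) (f : A -> B), [/\ C B, cont_hom f & f x <> f y].

(** Subalgebras are given by continuous injective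
    homomorphisms (their images are exactly the closed subalgebras, up to
    isomorphism); finite direct products are given by families of continuous
    homomorphisms B -> A_i whose joint map B -> prod_i A_i is bijective. *)
Definition stone_pseudovariety (C : alg_class) : Prop :=
  [/\ exists A, C A,
      (forall (A B : StoneAlg Om) (f : A -> B),
          C A -> cont_hom f -> (forall y : B, exists x, f x = y) -> C B),
      (forall (A B : StoneAlg Om) (f : B -> A),
          C A -> cont_hom f -> injective f -> C B)
    & (forall (k : nat) (A : 'I_k -> StoneAlg Om) (B : StoneAlg Om)
          (p : forall i, B -> A i),
          (forall i, C (A i)) -> (forall i, cont_hom (p i)) ->
          (forall b1 b2, (forall i, p i b1 = p i b2) -> b1 = b2) ->
          (forall a : forall i, A i, exists b, forall i, p i b = a i) ->
          C B)].

Definition generated (A : StoneAlg Om) (S : set A) : set A :=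
  fun x => forall G : set A, S `<=` G ->
    (forall n (w : Om n) (xs : 'I_n -> A), (forall i, G (xs i)) ->
        G (alg_op A w xs)) -> G x.

Definition is_free (C : alg_class) (X : topologicalType) (F : StoneAlg Om)
    (iota : X -> F) : Prop :=
  [/\ residually C F, continuous iota,
      closure (generated (range iota)) = [set: F]
    & forall (T : StoneAlg Om) (phi : X -> T), C T -> continuous phi ->
        exists h : F -> T, (cont_hom h /\ phi = h \o iota) /\
          forall h' : F -> T, cont_hom h' -> phi = h' \o iota -> h' = h].

Definition alg_iso (A B : StoneAlg Om) : Prop :=
  exists (f : A -> B) (g : B -> A),
    [/\ cont_hom f, cont_hom g, cancel f g & cancel g f].

End Defs.

From HB Require Import structures.
From mathcomp Require Import all_boot all_order.
From mathcomp Require Import all_classical all_reals all_analysis.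
From mathcomp Require finmap.

(* Members of S are residually S, and being residually S passes to subalgebras
   and finite products by composing separating maps, so the real work is
   closure under continuous images f : A ->> B.  Separate b1 <> b2 in B by a
   clopen set K.  By compactness of L x ~L, the clopen set L := f^-1 K is
   saturated by the kernel of finitely many continuous homomorphisms g_j into
   members of S, so the image E of A in prod_j C_j lies in S.  The syntactic
   congruence of K (a ~ b iff p a \in K <-> p b \in K for every translation,
   i.e. unary polynomial, p) is the kernel of a continuous map into a power of
   the discrete space bool.  Lifting translations along f shows that the kernel
   of A -> E is contained in that of A -> B -> B/~, so B/~ is a continuous
   image of E, hence in S, and it separates b1 from b2.
   For the free algebras, the universal property of the free residually-S
   algebra F2 yields h : F2 -> F1.  Every map from F2 into a member of S factors
   through h, so h is injective as F2 is residually S; its image is closed and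
   contains the subalgebra generated by X, which is dense in F1; and a
   continuous bijection from a compact space onto a Hausdorff one is a
   homeomorphism. *)

Set Implicit Arguments.
Unset Strict Implicit.
Unset Printing Implicit Defensive.

Local Open Scope classical_set_scope.

Lemma stone_space_zero_dimensional (T : topologicalType) :
  stone_space T -> zero_dimensional T.
Proof.
case=> _ hT clT x y /hausdorff_accessible[//|U [oU Ux Uy]].
have [V [clV Vx VU]] := clT x U oU (set_mem Ux).
exists V; split => // Vy.
by move: Uy; rewrite inE => /(_ (VU _ Vy)).
Qed.

Lemma zero_dimensional_hausdorff (T : topologicalType) :
  zero_dimensional T -> hausdorff_space T.
Proof.
move=> zT; rewrite open_hausdorff => x y /zT [C [[oC clC] Cx Cy]].
exists (C, ~` C); first by rewrite !inE.
by split => //=; [exact: closed_openC | rewrite setICr].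
Qed.

Lemma compact_zero_dimensional_stone (T : topologicalType) :
  compact [set: T] -> zero_dimensional T -> stone_space T.
Proof.
move=> cT zT; have hT := zero_dimensional_hausdorff zT.
split => // x U oU Ux.
have /(zero_dimensional_cvg hT zT cT)[V [Vx clV] VU] : nbhs x U.
  exact: open_nbhs_nbhs.
by exists V.
Qed.

Lemma zero_dimensional_pair (U V : topologicalType) :
  zero_dimensional U -> zero_dimensional V -> zero_dimensional (U * V)%type.
Proof.
move=> zU zV [x1 x2] [y1 y2] /eqP xy.
have [e1|/zU[C [clC Cx Cy]]] := eqVneq x1 y1; last first.
  exists (fst @^-1` C); split => //.
  by apply: (preimage_clopen clC) => -[? ?]; exact: cvg_fst.
have /zV[C [clC Cx Cy]] : x2 != y2 by apply/eqP => e2; apply: xy; rewrite e1 e2.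
exists (snd @^-1` C); split => //.
by apply: (preimage_clopen clC) => -[? ?]; exact: cvg_snd.
Qed.

Lemma zero_dimensional_set_type (T : topologicalType) (A : set T) :
  zero_dimensional T -> zero_dimensional (set_type A).
Proof.
move=> zT x y /eqP xy.
have /zT[C [clC Cx Cy]] : set_val x != set_val y.
  by apply: contra_not_neq xy => /val_inj.
exists (set_val @^-1` C); split => //.
by apply: (preimage_clopen clC); exact: initial_continuous.
Qed.

Lemma prod_continuous (X : topologicalType) (I : Type)
    (T : I -> topologicalType) (g : X -> prod_topology T) :
  (forall i, continuous (fun x => g x i)) -> continuous g.
Proof.
move=> cg x; apply/cvg_sup => i.
exact: (@continuous_comp_initial _ X (T i) (fun f : prod_topology T => f i) g
  (cg i) x).
Qed.

Lemma pair_continuous (X U V : topologicalType) (f : X -> U) (g : X -> V) :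
  continuous f -> continuous g -> continuous (fun x => (f x, g x)).
Proof. by move=> cf cg x; apply: cvg_pair; [exact: cf | exact: cg]. Qed.

Lemma compact_prod_topologyT (I : eqType) (T : I -> topologicalType) :
  (forall i, compact [set: T i]) -> compact [set: prod_topology T].
Proof.
move=> cT.
have -> : [set: prod_topology T] = [set f | forall i, [set: T i] (f i)].
  by apply/seteqP; split.
exact: (@tychonoff I T (fun i => [set: T i])).
Qed.

Lemma continuous_surj_factor (Z X Y : topologicalType)
    (q : Z -> X) (m : X -> Y) :
  compact [set: Z] -> hausdorff_space X -> continuous q ->
  (forall x, exists z, q z = x) -> continuous (m \o q) -> continuous m.
Proof.
move=> cZ hX cq qsurj cmq; apply/continuous_closedP => F clF.
have -> : m @^-1` F = q @` ((m \o q) @^-1` F).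
  apply/seteqP; split => [x Fx|_ [z Fmqz <-] //].
  by have [z qz] := qsurj x; exists z => //=; rewrite qz.
apply: compact_closed => //; apply: continuous_compact.
  exact: continuous_subspaceT.
apply: subclosed_compact cZ _ => //.
by move: cmq clF; rewrite continuous_closedP; apply.
Qed.

Lemma clopen_indicator_continuous (T : topologicalType) (K : set T) :
  clopen K -> continuous (fun x => `[< K x >]).
Proof.
move=> [oK clK] x U /principal_filterP Ufx.
have [Kx|nKx] := pselect (K x).
  apply: filterS (open_nbhs_nbhs (conj oK Kx)) => y Ky /=.
  by rewrite (asboolT Ky) -(asboolT Kx).
apply: filterS (open_nbhs_nbhs (conj (closed_openC clK) nKx)) => y nKy /=.
by rewrite (asboolF nKy) -(asboolF nKx).
Qed.

(* [compact_cover] is only stated for pointed spaces. *)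
Definition pointed_at (T : topologicalType) (t : T) : Type := T.
HB.instance Definition _ (T : topologicalType) (t : T) :=
  Topological.copy (pointed_at t) T.
HB.instance Definition _ (T : topologicalType) (t : T) :=
  isPointed.Build (pointed_at t) t.

Lemma compact_cover_compact (T : topologicalType) (A : set T) :
  compact A -> cover_compact A.
Proof.
move=> cA; have [[t _]|T0] := pselect (exists t : T, True); last first.
  by move=> I D f _ _; exists finmap.fset0 => // x _; case: T0; exists x.
have cA' : @compact (pointed_at t) A := cA.
by move: cA'; rewrite compact_cover.
Qed.

Lemma open_neq (X Y : topologicalType) (u v : X -> Y) :
  hausdorff_space Y -> continuous u -> continuous v ->
  open [set x | u x <> v x].
Proof.
move=> hY cu cv; rewrite openE => x /= uvx.
move: hY; rewrite open_hausdorff => /(_ (u x) (v x)) [].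
  exact/eqP.
case=> U V /= [Uux Vvx] [oU oV /eqP UV0].
have oUV : open (u @^-1` U `&` v @^-1` V).
  by apply: openI; [move: oU | move: oV]; apply: (iffLR (continuousP _)).
apply: filterS (open_nbhs_nbhs (conj oUV _)); last by split; exact: set_mem.
move=> z [Uuz Vvz] uvz; suff : (U `&` V) (u z) by rewrite UV0.
by split => //; rewrite uvz.
Qed.

Section Homomorphisms.
Variable Om : StoneSig.

Lemma cont_hom_id (A : StoneAlg Om) : cont_hom (@id A).
Proof. by split => // x; exact: cvg_id. Qed.

Lemma cont_hom_comp (A B C : StoneAlg Om) (f : A -> B) (g : B -> C) :
  cont_hom f -> cont_hom g -> cont_hom (g \o f).
Proof.
move=> [hf cf] [hg cg]; split => [n w xs /=|x]; first by rewrite hf hg.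
exact: continuous_comp (cf x) (cg (f x)).
Qed.

Definition kernel_congruence (A : StoneAlg Om) (Y : Type) (phi : A -> Y) :=
  forall n (w : Om n) (xs ys : 'I_n -> A),
    (forall i, phi (xs i) = phi (ys i)) ->
    phi (alg_op A w xs) = phi (alg_op A w ys).

Lemma hom_kernel_congruence (A B : StoneAlg Om) (f : A -> B) :
  is_hom f -> kernel_congruence f.
Proof.
by move=> hf n w xs ys fxy; rewrite !hf; congr (alg_op B w _); exact: funext.
Qed.

(* Replace xs by ys one coordinate at a time. *)
Lemma kernel_congruence_dfwith (A : StoneAlg Om) (Y : Type) (phi : A -> Y) :
  (forall n (w : Om n) (xs : 'I_n -> A) i a b, phi a = phi b ->
     phi (alg_op A w (dfwith xs i a)) = phi (alg_op A w (dfwith xs i b))) ->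
  kernel_congruence phi.
Proof.
move=> phi_dfwith n w xs ys phixy.
pose mix k (i : 'I_n) := if (i < k)%N then ys i else xs i.
suff mixP k : (k <= n)%N -> phi (alg_op A w xs) = phi (alg_op A w (mix k)).
  rewrite (mixP n (leqnn n)); congr (phi (alg_op A w _)).
  by apply: funext => i; rewrite /mix ltn_ord.
elim: k => [_|k IHk kn]; first by congr (phi (alg_op A w _)); apply: funext.
pose i0 : 'I_n := Ordinal kn.
have mix_k : mix k = dfwith (mix k) i0 (xs i0).
  by apply: funext => i; case: dfwithP => //; rewrite /mix ltnn.
have mix_Sk : mix k.+1 = dfwith (mix k) i0 (ys i0).
  apply: funext => i; case: dfwithP => [|j ne]; first by rewrite /mix ltnSn.
  rewrite /mix ltnS leq_eqVlt; case: eqP => // jk.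
  by case/eqP: ne; apply: val_inj.
by rewrite IHk ?(ltnW kn) // mix_Sk {1}mix_k; apply: phi_dfwith; exact: phixy.
Qed.

End Homomorphisms.

Section ImageAlgebra.
Variables (Om : StoneSig) (A : StoneAlg Om).
Variables (Y : topologicalType) (phi : A -> Y).

Definition image_space : topologicalType := set_type (range phi).

Definition image_proj (a : A) : image_space :=
  exist _ (phi a) (mem_set (imageT phi a)).

Definition image_rep (e : image_space) : A := s2val (cid2 (set_valP e)).

Lemma image_projE (a : A) : set_val (image_proj a) = phi a.
Proof. by rewrite set_valE. Qed.

Lemma image_repE (e : image_space) : phi (image_rep e) = set_val e.
Proof. by rewrite /image_rep; case: cid2. Qed.

Lemma image_proj_eq (a b : A) : phi a = phi b -> image_proj a = image_proj b.
Proof. by move=> phiab; apply: val_inj; rewrite -!set_valE !image_projE. Qed.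

Lemma image_repK : cancel image_rep image_proj.
Proof.
by move=> e; apply: val_inj; rewrite -set_valE image_projE image_repE.
Qed.

Lemma image_proj_surj (e : image_space) : exists a, image_proj a = e.
Proof. by exists (image_rep e); exact: image_repK. Qed.

Hypothesis phi_cont : continuous phi.

Lemma image_proj_continuous : continuous image_proj.
Proof.
exact: (@continuous_comp_initial _ A Y set_val image_proj phi_cont).
Qed.

Hypothesis Y_zero_dimensional : zero_dimensional Y.

Lemma image_space_stone : stone_space image_space.
Proof.
apply: compact_zero_dimensional_stone; last exact: zero_dimensional_set_type.
have [cA _ _] := alg_stone A.
have := continuous_compact (continuous_subspaceT image_proj_continuous) cA.
congr compact; apply/seteqP; split => // e _.
by have [a <-] := image_proj_surj e; exists a.
Qed.

Hypothesis phi_congr : kernel_congruence phi.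

Definition image_op n (w : Om n) (es : power image_space n) : image_space :=
  image_proj (alg_op A w (image_rep \o es)).

Lemma image_opE n (w : Om n) (xs : 'I_n -> A) :
  image_op w (image_proj \o xs) = image_proj (alg_op A w xs).
Proof.
apply: image_proj_eq; apply: phi_congr => i.
by rewrite /= image_repE image_projE.
Qed.

Lemma image_op_continuous n :
  continuous (fun p : Om n * power image_space n => image_op p.1 p.2).
Proof.
pose q (p : Om n * power A n) : Om n * power image_space n :=
  (p.1, image_proj \o p.2).
have zI := stone_space_zero_dimensional image_space_stone.
apply: (@continuous_surj_factor _ _ _ q).
- rewrite -setXTT; apply: compact_setX; first by case: (sig_stone Om n).
  by apply: compact_prod_topologyT => _; case: (alg_stone A).
- apply/zero_dimensional_hausdorff/zero_dimensional_pair.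
    exact: stone_space_zero_dimensional (sig_stone Om n).
  exact: (@zero_dimension_prod 'I_n (fun _ => image_space)).
- apply: pair_continuous => [p|]; first exact: cvg_fst.
  apply: prod_continuous => i p.
  apply: (@continuous_comp _ _ _ (fun p : Om n * power A n => p.2 i)).
    apply: (@continuous_comp _ _ _ snd (fun f : power A n => f i)).
      exact: cvg_snd.
    exact: proj_continuous.
  exact: image_proj_continuous.
- case=> w es; exists (w, image_rep \o es); rewrite /q /=; congr pair.
  by apply: funext => i /=; rewrite image_repK.
- rewrite (_ : _ \o q = image_proj \o fun p => alg_op A p.1 p.2).
    move=> p; apply: continuous_comp; first exact: alg_op_cont.
    exact: image_proj_continuous.
  by apply: funext => -[w xs]; rewrite /q /= image_opE.
Qed.

Definition image_alg : StoneAlg Om :=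
  Build_StoneAlg image_space_stone image_op_continuous.

Lemma image_proj_cont_hom : cont_hom (image_proj : A -> image_alg).
Proof.
split; last exact: image_proj_continuous.
by move=> n w xs /=; rewrite -image_opE.
Qed.

Lemma image_factor (B : StoneAlg Om) (chi : A -> B) :
  cont_hom chi -> (forall a b, phi a = phi b -> chi a = chi b) ->
  exists m : image_alg -> B, cont_hom m /\ forall a, m (image_proj a) = chi a.
Proof.
move=> [hchi cchi] chi_phi.
have mE a : chi (image_rep (image_proj a)) = chi a.
  by apply: chi_phi; rewrite image_repE image_projE.
exists (chi \o image_rep); split => //; split => [n w es /=|].
  by rewrite mE hchi.
apply: (@continuous_surj_factor _ _ _ image_proj) => //.
- by case: (alg_stone A).
- by case: image_space_stone.
- exact: image_proj_continuous.
- exact: image_proj_surj.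
- by rewrite (_ : _ \o _ = chi) //; apply: funext => a /=; rewrite mE.
Qed.

End ImageAlgebra.

Section ProductAlgebra.
Variables (Om : StoneSig) (I : choiceType) (C : I -> StoneAlg Om).

Definition prod_space : topologicalType :=
  prod_topology (fun j => alg_car (C j)).

Definition prod_op n (w : Om n) (ts : power prod_space n) : prod_space :=
  fun j => alg_op (C j) w (fun i => ts i j).

Lemma prod_space_stone : stone_space prod_space.
Proof.
apply: compact_zero_dimensional_stone.
  by apply: compact_prod_topologyT => j; case: (alg_stone (C j)).
apply: zero_dimension_prod => j.
exact: stone_space_zero_dimensional (alg_stone (C j)).
Qed.

Lemma prod_op_continuous n :
  continuous (fun p : Om n * power prod_space n => prod_op p.1 p.2).
Proof.
apply: prod_continuous => j p.
apply: (@continuous_comp _ _ _ (fun p : Om n * power prod_space n =>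
   (p.1, (fun i => p.2 i j) : power (C j) n))
   (fun q : Om n * power (C j) n => alg_op (C j) q.1 q.2)).
  apply: pair_continuous => [{}p|]; first exact: cvg_fst.
  apply: prod_continuous => i {}p.
  apply: (@continuous_comp _ _ _ snd (fun f : power prod_space n => f i j)).
    exact: cvg_snd.
  apply: (@continuous_comp _ _ _ (fun f : power prod_space n => f i)
    (fun g : prod_space => g j)); exact: proj_continuous.
exact: alg_op_cont.
Qed.

Definition prod_alg : StoneAlg Om :=
  Build_StoneAlg prod_space_stone prod_op_continuous.

Lemma proj_cont_hom j : cont_hom (fun t : prod_alg => t j).
Proof. by split => //; exact: proj_continuous. Qed.

Definition prod_tuple (A : Type) (g : forall j, A -> C j) (a : A) : prod_alg :=
  fun j => g j a.

Lemma prod_tuple_cont_hom (A : StoneAlg Om) (g : forall j, A -> C j) :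
  (forall j, cont_hom (g j)) -> cont_hom (prod_tuple g).
Proof.
move=> hg; split; last by apply: prod_continuous => j; exact: (hg j).2.
move=> n w xs; apply: functional_extensionality_dep => j.
by rewrite /prod_tuple (hg j).1.
Qed.

End ProductAlgebra.

Section SyntacticCongruence.
Variables (Om : StoneSig) (B : StoneAlg Om).

Inductive translation : (B -> B) -> Prop :=
| translation_id : translation id
| translation_comp p n (w : Om n) (xs : 'I_n -> B) (i : 'I_n) :
    translation p -> translation (p \o fun z => alg_op B w (dfwith xs i z)).

Lemma translation_continuous p : translation p -> continuous p.
Proof.
elim=> [x|q n w xs i _ cq z]; first exact: cvg_id.
apply: continuous_comp (cq _).
apply: (@continuous_comp _ _ _ (fun z : B => (w, (dfwith xs i z : power B n)))
   (fun p : Om n * power B n => alg_op B p.1 p.2)); last exact: alg_op_cont.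
by apply: pair_continuous => [?|]; [exact: cvg_cst | exact: dfwith_continuous].
Qed.

(* [zero_dimension_prod] needs a choiceType of indices. *)
Definition translations := {classic {p : B -> B | translation p}}.

Definition syntactic (K : set B) (b : B) :
    prod_topology (fun _ : translations => bool) :=
  fun p => `[< K (sval p b) >].

Lemma syntactic_continuous (K : set B) : clopen K -> continuous (syntactic K).
Proof.
move=> clK; apply: prod_continuous => -[p tp] b /=.
apply: (@continuous_comp _ _ _ p (fun x => `[< K x >])).
  exact: translation_continuous.
exact: clopen_indicator_continuous.
Qed.

Lemma syntacticP (K : set B) (a b : B) :
  syntactic K a = syntactic K b <->
  forall p, translation p -> (K (p a) <-> K (p b)).
Proof.
split => [eqab p tp|Kab].
  exact: asbool_eq_equiv (congr1 (fun f => f (exist _ p tp)) eqab).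
by apply: functional_extensionality_dep => -[p tp]; apply/asbool_equiv_eq/Kab.
Qed.

Lemma syntactic_congruence (K : set B) : kernel_congruence (syntactic K).
Proof.
apply: kernel_congruence_dfwith => n w xs i a b /syntacticP Kab.
apply/syntacticP => p tp; exact: (Kab _ (translation_comp w xs i tp)).
Qed.

End SyntacticCongruence.

Lemma translation_lift (Om : StoneSig) (A B : StoneAlg Om) (f : A -> B)
    (Y : Type) (phi : A -> Y) :
  is_hom f -> (forall y, exists x, f x = y) -> kernel_congruence phi ->
  forall p, translation p -> forall a b, phi a = phi b ->
    exists a' b', [/\ phi a' = phi b', f a' = p (f a) & f b' = p (f b)].
Proof.
move=> hf fsurj phi_congr p; elim=> [|q n w xs i _ IHq] a b phiab.
  by exists a, b.
have [ys fys] := choice (fun k => fsurj (xs k)).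
have fE c : f (alg_op A w (dfwith ys i c)) = alg_op B w (dfwith xs i (f c)).
  rewrite hf; congr (alg_op B w _); apply: funext => k.
  by have [<-|ik] := eqVneq i k; rewrite ?dfwithin ?dfwithout.
have [|a' [b' [phiab' fa' fb']]] :=
  IHq (alg_op A w (dfwith ys i a)) (alg_op A w (dfwith ys i b)).
  apply: phi_congr => k.
  by have [<-|ik] := eqVneq i k; rewrite ?dfwithin ?dfwithout.
by exists a', b'; rewrite fa' fb' !fE.
Qed.

Section Residually.
Variables (Om : StoneSig) (S : alg_class Om).

Lemma residually_clopen_saturation (A : StoneAlg Om) (L : set A) :
  residually S A -> clopen L ->
  exists m (C : 'I_m -> StoneAlg Om) (g : forall j, A -> C j),
    [/\ forall j, S (C j), forall j, cont_hom (g j) &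
        forall x y, (forall j, g j x = g j y) -> L x -> L y].
Proof.
move=> rA [oL clL]; have [cA _ _] := alg_stone A.
pose G := L `*` ~` L.
have sep p : exists Bg : {B : StoneAlg Om & A -> B}, G p ->
    [/\ S (projT1 Bg), cont_hom (projT2 Bg) & projT2 Bg p.1 <> projT2 Bg p.2].
  case: p => x y; have [[Lx nLy]|nG] := pselect (G (x, y)); last first.
    by exists (existT _ A id) => /nG.
  have /rA[B [g [SB hg gxy]]] : x <> y by move=> exy; apply: nLy; rewrite -exy.
  by exists (existT _ B g).
have [Bg Bg_sep] := choice sep.
pose O p := [set q : A * A | projT2 (Bg p) q.1 <> projT2 (Bg p) q.2].
have [D' D'G GD'] : finite_subset_cover G O G.
  apply: compact_cover_compact => [|p Gp|p Gp].
  - apply: compact_setX; apply: subclosed_compact cA _ => //.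
    exact: open_closedC.
  - have [_ [_ cg] _] := Bg_sep p Gp.
    apply: open_neq; first by case: (alg_stone (projT1 (Bg p))).
      by move=> q; apply: continuous_comp (cg _); exact: cvg_fst.
    by move=> q; apply: continuous_comp (cg _); exact: cvg_snd.
  - by exists p => //; case: (Bg_sep p Gp).
pose s := in_tuple (finmap.enum_fset D').
exists (size s), (fun j => projT1 (Bg (tnth s j))).
exists (fun j => projT2 (Bg (tnth s j))).
have sG j : G (tnth s j) by apply: set_mem; apply: D'G; exact: mem_tnth.
split=> [j|j|x y gxy Lx]; try by case: (Bg_sep _ (sG j)).
apply: contrapT => nLy; have [p D'p] := GD' (x, y) (conj Lx nLy).
have p_s : (index p s < size s)%N by rewrite index_mem.
by apply; have := gxy (Ordinal p_s); rewrite (tnth_nth p) /= nth_index.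
Qed.

Lemma class_residually (A : StoneAlg Om) : S A -> residually S A.
Proof. by move=> SA x y xy; exists A, id; split => //; exact: cont_hom_id. Qed.

Lemma residually_residually (A : StoneAlg Om) :
  residually (residually S) A -> residually S A.
Proof.
move=> rrA x y /rrA[B [g [rB hg /rB[C [k [SC hk kgxy]]]]]].
by exists C, (k \o g); split => //; exact: cont_hom_comp.
Qed.

Lemma residually_jointly_injective (I : Type) (A : I -> StoneAlg Om)
    (B : StoneAlg Om) (p : forall i, B -> A i) :
  (forall i, residually S (A i)) -> (forall i, cont_hom (p i)) ->
  (forall b1 b2, (forall i, p i b1 = p i b2) -> b1 = b2) -> residually S B.
Proof.
move=> rA hp p_inj x y xy.
have [i /rA[C [g [SC hg gpxy]]]] : exists i, p i x <> p i y.
  by apply/existsNP => pxy; apply/xy/p_inj.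
by exists C, (g \o p i); split => //; exact: cont_hom_comp.
Qed.

Hypothesis hS : stone_pseudovariety S.

Lemma pseudovariety_prod k (C : 'I_k -> StoneAlg Om) :
  (forall j, S (C j)) -> S (prod_alg C).
Proof.
case: hS => _ _ _ Sprod SC.
apply: (Sprod k C (prod_alg C) (fun j t => t j)) => //.
- exact: proj_cont_hom.
- by move=> t1 t2 t12; exact: functional_extensionality_dep.
- by move=> t; exists t.
Qed.

Lemma pseudovariety_image_hom (A P : StoneAlg Om) (phi : A -> P)
    (zP : zero_dimensional P) (cphi : continuous phi)
    (kphi : kernel_congruence phi) :
  is_hom phi -> S P -> S (image_alg cphi zP kphi).
Proof.
case: hS => _ _ Ssub _ hphi SP.
apply: (Ssub P _ (fun e : image_alg cphi zP kphi => set_val e : P)) => //.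
split; last exact: initial_continuous.
move=> n w es; rewrite /= /image_op image_projE hphi.
by congr (alg_op P w _); apply: funext => i /=; rewrite image_repE.
Qed.

Lemma residually_image (A B : StoneAlg Om) (f : A -> B) :
  residually S A -> cont_hom f -> (forall y, exists x, f x = y) ->
  residually S B.
Proof.
move=> rA [hf cf] fsurj b1 b2 /eqP.
case/(stone_space_zero_dimensional (alg_stone B)) => K [clK Kb1 nKb2].
have [m [C [g [SC hg L_sat]]]] :=
  residually_clopen_saturation rA (preimage_clopen clK cf).
pose phi := prod_tuple g; have [hphi cphi] := prod_tuple_cont_hom hg.
have kphi := hom_kernel_congruence hphi.
have zP := stone_space_zero_dimensional (prod_space_stone C).
pose E := image_alg cphi zP kphi.
have SE : S E by apply: pseudovariety_image_hom hphi (pseudovariety_prod SC).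
have zK : zero_dimensional (prod_topology (fun _ : translations B => bool)).
  by apply: zero_dimension_prod => _; exact: discrete_zero_dimension.
pose D :=
  image_alg (syntactic_continuous clK) zK (syntactic_congruence (K := K)).
pose chi := image_proj (syntactic K).
have hD : cont_hom (chi : B -> D) by exact: image_proj_cont_hom.
have chi_phi a b : phi a = phi b -> chi (f a) = chi (f b).
  move=> phiab; apply/image_proj_eq/syntacticP => p tp.
  have [a' [b' [phiab' <- <-]]] := translation_lift hf fsurj kphi tp phiab.
  have phiab'_j j : g j a' = g j b' := congr1 (fun t => t j) phiab'.
  by split; apply: L_sat => j; rewrite phiab'_j.
have [q [hq qE]] :=
  image_factor cphi zP kphi (cont_hom_comp (conj hf cf) hD) chi_phi.
have SD : S D.
  case: hS => _ Simg _ _; apply: (Simg E D q SE hq) => d.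
  have [b <-] := image_proj_surj d; have [a <-] := fsurj b.
  by exists (image_proj phi a); rewrite qE.
exists D, chi; split => // /(congr1 set_val).
by rewrite !image_projE => /syntacticP/(_ id (translation_id B))[/(_ Kb1)].
Qed.

Lemma residually_pseudovariety : stone_pseudovariety (residually S).
Proof.
have [[A0 SA0] _ _ _] := hS; split.
- by exists A0; exact: class_residually.
- exact: residually_image.
- move=> A B f rA hf f_inj.
  apply: (@residually_jointly_injective unit (fun=> A) B (fun=> f)) => //.
  by move=> x y /(_ tt)/f_inj.
- move=> k A B p rA hp p_inj _.
  exact: residually_jointly_injective rA hp p_inj.
Qed.

End Residually.

Section Isomorphisms.
Variable Om : StoneSig.

Lemma alg_iso_sym (A B : StoneAlg Om) : alg_iso A B -> alg_iso B A.
Proof. by case=> f [g [hf hg fK gK]]; exists g, f. Qed.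

Lemma bijective_cont_hom_iso (A B : StoneAlg Om) (h : A -> B) :
  cont_hom h -> injective h -> (forall y, exists x, h x = y) -> alg_iso A B.
Proof.
move=> [hh ch] h_inj /choice[g hgK].
have ghK : cancel h g by move=> x; apply: h_inj; rewrite hgK.
exists h, g; split => //; split.
  move=> n w ys; apply: h_inj; rewrite hh hgK; congr (alg_op B w _).
  by apply: funext => i; rewrite hgK.
apply: (@continuous_surj_factor _ _ _ h) => //.
- by case: (alg_stone A).
- by case: (alg_stone B).
- by move=> y; exists (g y).
- rewrite (_ : g \o h = id); last exact: funext ghK.
  by move=> x; exact: cvg_id.
Qed.

Lemma cont_hom_dense_surj (X : topologicalType) (A B : StoneAlg Om)
    (iota : X -> A) (h : B -> A) :
  cont_hom h -> closure (generated (range iota)) = [set: A] ->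
  range iota `<=` range h -> forall y, exists x, h x = y.
Proof.
move=> [hh ch] dense iota_h y.
have [cB _ _] := alg_stone B; have [_ hA _] := alg_stone A.
have gen_h : generated (range iota) `<=` range h.
  move=> z; apply => // n w xs hxs.
  exists (alg_op B w (fun i => s2val (cid2 (hxs i)))) => //.
  by rewrite hh; congr (alg_op A w _); apply: funext => i; case: cid2.
have clh : closed (range h).
  apply: compact_closed hA _; apply: continuous_compact cB.
  exact: continuous_subspaceT.
have /(closureS gen_h) : closure (generated (range iota)) y by rewrite dense.
by rewrite -(closure_id _).1 // => -[x _ <-]; exists x.
Qed.

(* A map k separating x from y into a member of S factors as u \o h, by
   uniqueness in the universal property of F2. *)
Lemma free_comparison_injective (S : alg_class Om) (X : topologicalType)
    (F1 F2 : StoneAlg Om) (iota1 : X -> F1) (iota2 : X -> F2) (h : F2 -> F1) :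
  is_free S iota1 -> is_free (residually S) iota2 ->
  cont_hom h -> iota1 = h \o iota2 -> injective h.
Proof.
move=> [_ _ _ univ1] [r2 c2 _ univ2] hh h_iota x y hxy; apply: contrapT.
move=> /(residually_residually r2)[C [k [SC hk kxy]]].
have ck : continuous (k \o iota2).
  by move=> z; apply: continuous_comp (c2 z) (hk.2 _).
have [u [[hu u_iota] _]] := univ1 C (k \o iota2) SC ck.
have [k' [_ uniq2]] := univ2 C (k \o iota2) (class_residually SC) ck.
suff k_uh : k = u \o h by apply: kxy; rewrite k_uh /= hxy.
rewrite (uniq2 k hk erefl); apply/esym/uniq2; first exact: cont_hom_comp.
by rewrite u_iota h_iota.
Qed.

End Isomorphisms.

Theorem corollary5p13 (Om : StoneSig) (S : alg_class Om) :
  stone_pseudovariety S ->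
  stone_pseudovariety (residually S) /\
  (forall (X : topologicalType) (F1 F2 : StoneAlg Om)
          (iota1 : X -> F1) (iota2 : X -> F2),
     is_free S iota1 -> is_free (residually S) iota2 -> alg_iso F1 F2).
Proof.
move=> hS; split; first exact: residually_pseudovariety.
move=> X F1 F2 iota1 iota2 free1 free2.
have [r1 c1 dense1 _] := free1; have [_ _ _ univ2] := free2.
have [h [[hh h_iota] _]] := univ2 F1 iota1 r1 c1.
apply/alg_iso_sym/(bijective_cont_hom_iso hh).
  exact: free_comparison_injective free1 free2 hh h_iota.
apply: cont_hom_dense_surj hh dense1 _ => _ [x _ <-].
by exists (iota2 x); rewrite // h_iota.
Qed.
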